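(* Let $q=\{q_n\}_{n\geq1}$ be a system of Beurling primes with $\sigma_c(\zeta_q)<\infty$. Then for almost every $x\in\mathbb{R}$, $$\mu_q(x)\leq 2\sigma_c(\zeta_q).$$
   Context: A system of Beurling primes is an increasing sequence $q=\{q_n\}$ of real numbers with $1<q_n\to\infty$ such that $\{\log q_n\}$ is linearly independent over $\mathbb{Q}$; its Beurling integers $\{\nu_n\}_{n\geq1}$ are all finite products of elements of $q$ (including $1$), listed increasingly. $\zeta_q(s)=\sum_n\nu_n^{-s}$ and $\sigma_c(\zeta_q)$ is its abscissa of convergence. For $x\in\mathbb{R}$, the $q$-irrationality measure $\mu_q(x)$ is the infimum of the set of $r>0$ such that $|x-\nu_m/\nu_n|<\nu_n^{-r}$ holds for at most finitely many pairs $(m,n)\in\mathbb{N}\times\mathbb{N}$. *)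

From HB Require Import structures.
From mathcomp Require Import all_boot all_order all_algebra.
From mathcomp Require Import all_classical all_reals all_analysis.
Set Implicit Arguments. Unset Strict Implicit. Unset Printing Implicit Defensive.
Import Order.TTheory GRing.Theory Num.Theory.
Import numFieldNormedType.Exports.
Local Open Scope classical_set_scope.
Local Open Scope ring_scope.

Definition is_beurling_primes (R : realType) (q : nat -> R) : Prop :=
  [/\ {homo q : m n / (m < n)%N >-> m < n},
      (forall n, 1 < q n),
      q n @[n --> \oo] --> +oo &
      (forall (n : nat) (c : 'I_n -> rat),
          \sum_(i < n) ratr (c i) * ln (q i) = 0 -> forall i, c i = 0)].

Definition beurling_integers (R : realType) (q : nat -> R) : set R :=
  [set y | exists (n : nat) (e : 'I_n -> nat), y = \prod_(i < n) q i ^+ e i].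

Definition lists_increasingly (R : realType) (nu : nat -> R) (B : set R) : Prop :=
  {homo nu : m n / (m < n)%N >-> m < n} /\ range nu = B.

Definition abscissa_conv (R : realType) (nu : nat -> R) : \bar R :=
  ereal_inf [set s%:E | s in [set s : R | cvgn (series (fun n => nu n `^ (- s)))]].

Definition q_irr_measure (R : realType) (nu : nat -> R) (x : R) : \bar R :=
  ereal_inf [set r%:E | r in [set r : R | 0 < r /\
     finite_set [set mn : nat * nat |
        `|x - nu mn.1 / nu mn.2| < nu mn.2 `^ (- r)]]].

(* The proof is a Borel-Cantelli argument.  Fix a window [-N, N], an order
   r, and s > 0 with 2 s < r such that sum_n nu_n^(-s) converges.  Let A_n
   be the set of x in [-N, N] within nu_n^(-r) of some quotient
   nu_m / nu_n.  Such a quotient has nu_m < (N+1) nu_n, so the ball around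
   it has length 2 nu_n^(-r) <= C nu_n^(s-r) nu_m^(-s); summing over m and
   then over n (using nu_n^(s-r) <= nu_n^(-s)) shows sum_n |A_n| < oo, so
   limsup A_n is null.  As nu is increasing and unbounded, a point of
   [-N, N] with infinitely many approximating pairs (m, n) lies in
   limsup A_n.  Any r > 2 sigma admits such an s, and taking
   r = 2 sigma + 1/(k+1) for all k, and all N, yields the theorem. *)

From HB Require Import structures.
From mathcomp Require Import all_boot all_order all_algebra.
From mathcomp Require Import all_classical all_reals all_analysis.
From mathcomp Require Import ring lra.
Import Order.TTheory GRing.Theory Num.Theory.
Import numFieldNormedType.Exports.
Local Open Scope classical_set_scope.
Local Open Scope ring_scope.

Lemma powR_le1 (R : realType) (a t : R) : 1 <= a -> t <= 0 -> a `^ t <= 1.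
Proof. by move=> a1 t0; rewrite -(powRr0 a) ler_powR. Qed.

Lemma nneseries_EFin (R : realType) (u : R^nat) : cvgn (series u) ->
  (\sum_(0 <= k <oo) (u k)%:E = (limn (series u))%:E)%E.
Proof.
move=> cu; rewrite -EFin_lim //; apply/congr_lim/funext => n.
by rewrite /series /= sumEFin.
Qed.

Lemma lee_inv_succ (R : realType) (a : \bar R) (b : R) :
  (forall k : nat, a <= (b + k.+1%:R^-1)%:E)%E -> (a <= b%:E)%E.
Proof.
move=> ab; apply/lee_addgt0Pr => e e0.
have ei0 : 0 <= e^-1 by rewrite invr_ge0 ltW.
pose k := Num.Def.archi_bound e^-1.
apply: le_trans (ab k) _; rewrite -EFinD lee_fin lerD2l ltW //.
rewrite invf_plt ?posrE //.
by apply: lt_le_trans (archi_boundP ei0) _; rewrite ler_nat.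
Qed.

Lemma beurling_integer_ge1 (R : realType) (q : nat -> R) y :
  (forall i, 1 <= q i) -> beurling_integers q y -> 1 <= y.
Proof.
move=> q1 [n [e ->]]; apply: (big_ind (fun x => 1 <= x)) => //.
- by move=> a b; apply: mulr_ege1.
- by move=> i _; apply: exprn_ege1.
Qed.

Lemma beurling_prime_integer (R : realType) (q : nat -> R) N :
  beurling_integers q (q N).
Proof.
exists N.+1, (fun i : 'I_N.+1 => (i == N :> nat) : nat).
rewrite big_ord_recr /= eqxx expr1 big1 ?mul1r // => i _.
by rewrite /= ltn_eqF.
Qed.

Section beurling_listing.
Context {R : realType} {q nu : nat -> R}.
Hypotheses (hq : is_beurling_primes q)
           (hnu : lists_increasingly nu (beurling_integers q)).

Lemma listing_ge1 n : 1 <= nu n.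
Proof.
have [_ q1 _ _] := hq; apply: (@beurling_integer_ge1 _ q) => [i|].
  exact: ltW.
by rewrite -hnu.2; exists n.
Qed.

(* nu tends to infinity: it is increasing and takes every value q N. *)
Lemma listing_unbounded Y : exists j, forall m, (j <= m)%N -> Y < nu m.
Proof.
have [_ _ qoo _] := hq; have [nu_incr rg] := hnu.
have [N _ HN] := (@cvgryPgt _ _ _ _ q).1 qoo Y.
have : range nu (q N) by rewrite rg; exact: beurling_prime_integer.
move=> [j _ nuj]; exists j => m jm; apply: lt_le_trans (HN N (leqnn N)) _.
rewrite -nuj; move: jm; rewrite leq_eqVlt => /orP[/eqP -> //|/nu_incr/ltW //].
Qed.

End beurling_listing.

(* The pairs (m, n) whose quotient nu m / nu n approximates x to within
   nu n ^ (-r); q_irr_measure asks for which r this set is finite. *)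
Definition approx_pairs {R : realType} (nu : nat -> R) (r x : R) :
  set (nat * nat) :=
  [set mn | `|x - nu mn.1 / nu mn.2| < nu mn.2 `^ (- r)].

Section approximation_by_quotients.
Context {R : realType} {nu : nat -> R}.
Hypothesis nu_ge1 : forall n, 1 <= nu n.

Lemma nu_gt0 n : 0 < nu n.
Proof. exact: lt_le_trans (nu_ge1 n). Qed.

Lemma approx_numerator_lt {N r x : R} {m n : nat} : 0 <= r -> `|x| <= N ->
  approx_pairs nu r x (m, n) -> nu m < (N + 1) * nu n.
Proof.
move=> r0 xN /= approx.
have /(lt_le_trans approx) : nu n `^ (- r) <= 1.
  by apply: powR_le1; rewrite ?oppr_le0.
rewrite -ltr_pdivrMr ?nu_gt0 //.
move: xN; rewrite ler_norml ltr_distlC => /andP[? ?] /andP[? ?]; lra.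
Qed.

Context {N r s : R}.
Hypotheses (N_ge0 : 0 <= N) (s_gt0 : 0 < s) (two_s_lt_r : 2 * s < r).

Let r_ge0 : 0 <= r.
Proof. by apply: le_trans (ltW two_s_lt_r); rewrite mulr_ge0 // ltW. Qed.

Definition approx_ball n m : set R :=
  [set` `[- N, N]] `&` ball (nu m / nu n) (nu n `^ (- r)).
Definition approx_set n : set R := \bigcup_m approx_ball n m.

Lemma measurable_approx_ball n m : measurable (approx_ball n m).
Proof. by apply: measurableI => //; apply: measurable_realfun.measurable_ball. Qed.

Lemma measurable_approx_set n : measurable (approx_set n).
Proof. by apply: bigcupT_measurable => m; apply: measurable_approx_ball. Qed.

Let C := 2 * (N + 1) `^ s.

Let C_ge0 : 0 <= C. Proof. by rewrite mulr_ge0 ?powR_ge0. Qed.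

(* The ball is empty unless nu m < (N+1) nu n, in which case its length
   2 nu n^(-r) is at most 2 nu n^(-r) ((N+1) nu n / nu m)^s. *)
Lemma approx_ball_measure n m : (lebesgue_measure (approx_ball n m) <=
  (C * nu n `^ (s - r) * nu m `^ (- s))%:E)%E.
Proof.
have rhs_ge0 : 0 <= C * nu n `^ (s - r) * nu m `^ (- s).
  by rewrite !mulr_ge0 ?powR_ge0.
have [m_large|m_small] := leP ((N + 1) * nu n) (nu m).
  suff -> : approx_ball n m = set0 by rewrite measure0 lee_fin.
  apply/seteqP; split => // x [/= xN xball]; move: m_large.
  rewrite leNgt (approx_numerator_lt (x := x) r_ge0) //.
    by rewrite ler_norml; move: xN; rewrite in_itv.
  by move: xball; rewrite /ball /= distrC.
have radius_ge0 : 0 <= nu n `^ (- r) by apply: powR_ge0.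
apply: le_trans (le_measure _ _ _ (@subIsetr _ _ _)) _; rewrite ?inE.
- exact: measurable_approx_ball.
- exact: measurable_realfun.measurable_ball.
apply: (@le_trans _ _ (nu n `^ (- r) *+ 2)%:E).
  by rewrite le_eqVlt; apply/predU1P; left; exact: lebesgue_measure_ball.
rewrite lee_fin.
have quotient_power : nu m `^ s <= (N + 1) `^ s * nu n `^ s.
  rewrite -powRM ?(ltW (nu_gt0 _)) ?addr_ge0 //.
  apply: ge0_ler_powR; rewrite ?nnegrE ?ltW ?nu_gt0 //.
  by rewrite mulr_gt0 ?nu_gt0 // ltr_wpDl.
have nums_gt0 : 0 < nu m `^ s by rewrite powR_gt0 ?nu_gt0.
have nurs_gt0 : 0 < nu n `^ r by rewrite powR_gt0 ?nu_gt0.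
rewrite powRD ?(gt_eqF (nu_gt0 n)) ?implybT // !powRN /C.
set A := (N + 1) `^ s in quotient_power *; set X := nu n `^ s in quotient_power *.
set Y := nu m `^ s in nums_gt0 quotient_power *; set P := nu n `^ r in nurs_gt0 *.
have -> : 2 * A * (X / P) * Y^-1 = (P^-1 *+ 2) * (A * X / Y).
  by rewrite mulr2n; ring.
apply: ler_peMr; first by rewrite mulrn_wge0 // invr_ge0 ltW.
by rewrite ler_pdivlMr // mul1r.
Qed.

Hypothesis zeta_cvg : cvgn (series (fun n => nu n `^ (- s))).

Let Z := limn (series (fun n => nu n `^ (- s))).

Let Z_ge0 : 0 <= Z.
Proof.
rewrite -lee_fin -nneseries_EFin //; apply: nneseries_ge0 => k _ _.
by rewrite lee_fin powR_ge0.
Qed.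

Lemma approx_set_measure n :
  (lebesgue_measure (approx_set n) <= (C * Z * nu n `^ (s - r))%:E)%E.
Proof.
apply: le_trans (@measure_sigma_subadditive_tail _ R _ lebesgue_measure
  (approx_set n) (approx_ball n) 0 (measurable_approx_ball n)
  (measurable_approx_set n) _) _.
  by move=> x [m _ xm]; exists m.
apply: le_trans (lee_nneseries
  (v := fun m => ((C * nu n `^ (s - r)) * nu m `^ (- s))%:E) _ _) _.
- by move=> m _ _; apply: measure_ge0.
- by move=> m _; apply: approx_ball_measure.
under eq_eseriesr do rewrite EFinM.
rewrite nneseriesZl; last by move=> m _; rewrite lee_fin powR_ge0.
by rewrite nneseries_EFin // -EFinM lee_fin mulrAC.
Qed.

(* Since s - r < -s, the measures of the approx_set n have a finite sum. *)
Lemma approx_sets_summable :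
  (\sum_(0 <= n <oo) lebesgue_measure (approx_set n) < +oo)%E.
Proof.
apply: le_lt_trans (lee_nneseries (v := fun n => ((C * Z) * nu n `^ (- s))%:E)
  _ _) _.
- by move=> n _ _; apply: measure_ge0.
- move=> n _; apply: le_trans (approx_set_measure n) _.
  rewrite lee_fin ler_wpM2l ?(mulr_ge0 C_ge0 Z_ge0) //; apply: ler_powR => //.
  by have := two_s_lt_r; lra.
under eq_eseriesr do rewrite EFinM.
rewrite nneseriesZl; last by move=> n _; rewrite lee_fin powR_ge0.
by rewrite nneseries_EFin // -EFinM ltry.
Qed.

Hypothesis nu_incr : {homo nu : m n / (m < n)%N >-> m < n}.
Hypothesis nu_unbounded : forall Y, exists j, forall m, (j <= m)%N -> Y < nu m.

(* A point of [-N, N] with infinitely many approximations lies in infinitely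
   many approx_set n: finitely many denominators would bound the numerators. *)
Lemma infinitely_approximable_sub_limsup :
  [set x | `|x| <= N /\ infinite_set (approx_pairs nu r x)] `<=`
  lim_sup_set approx_set.
Proof.
move=> x [xN infx] K _; apply: contrapT => notinK; apply: infx.
have [j numerator_bound] := nu_unbounded ((N + 1) * nu K).
apply: (@sub_finite_set _ _ (`I_j `*` `I_K)); last first.
  exact: finite_setX (finite_II j) (finite_II K).
move=> [m n] /= mn_approx.
have nK : (n < K)%N.
  rewrite ltnNge; apply/negP => Kn; apply: notinK; exists n => //.
  exists m => //; split; first by rewrite /= in_itv /= -ler_norml.
  by rewrite /ball /= distrC.
split => //=; rewrite ltnNge; apply/negP => /numerator_bound.
have := approx_numerator_lt r_ge0 xN mn_approx.
have : (N + 1) * nu n <= (N + 1) * nu K.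
  by rewrite ler_wpM2l ?addr_ge0 // ltW // nu_incr.
lra.
Qed.

(* Borel-Cantelli: the limsup of the summable family approx_set is null. *)
Lemma infinitely_approximable_negligible : lebesgue_measure.-negligible
  [set x | `|x| <= N /\ infinite_set (approx_pairs nu r x)].
Proof.
exists (lim_sup_set approx_set); split.
- apply: bigcapT_measurable => k.
  by apply: bigcup_measurable => n _; apply: measurable_approx_set.
- apply: lim_sup_set_cvg0; first exact: measurable_approx_set.
  exact: approx_sets_summable.
- exact: infinitely_approximable_sub_limsup.
Qed.

End approximation_by_quotients.

Section abscissa.
Context {R : realType} {nu : nat -> R}.
Hypothesis nu_ge1 : forall n, 1 <= nu n.

(* For s <= 0 every term is at least 1, so the series diverges. *)
Lemma zeta_cvg_gt0 s : cvgn (series (fun n => nu n `^ (- s))) -> 0 < s.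
Proof.
move=> zeta_cvg; rewrite ltNge; apply/negP => s_le0.
have terms_cvg0 := cvg_series_cvg_0 zeta_cvg.
suff : 1 <= limn (fun n => nu n `^ (- s)) by rewrite (cvg_lim _ terms_cvg0) ?ler10.
apply: limr_ge; first by apply/cvg_ex; exists 0.
by apply: nearW => n; rewrite -(powRr0 (nu n)) ler_powR // oppr_ge0.
Qed.

Lemma abscissa_ge0 : (0 <= abscissa_conv nu)%E.
Proof.
apply/ereal_infP => _ [s zeta_cvg <-].
by rewrite lee_fin ltW // zeta_cvg_gt0.
Qed.

Hypothesis nu_incr : {homo nu : m n / (m < n)%N >-> m < n}.
Hypothesis nu_unbounded : forall Y, exists j, forall m, (j <= m)%N -> Y < nu m.

(* For r > 2 * abscissa, almost no x has infinitely many approximations of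
   order r: pick s with 2 s < r in the domain of convergence and exhaust R by
   the windows [-N, N]. *)
Lemma infinitely_approximable_ae_negligible {r : R} :
  (abscissa_conv nu < (r / 2)%:E)%E ->
  lebesgue_measure.-negligible [set x | infinite_set (approx_pairs nu r x)].
Proof.
move=> /ereal_inf_lt[_ [s zeta_cvg <-]]; rewrite lte_fin => s_lt.
have s_gt0 := zeta_cvg_gt0 s zeta_cvg.
have two_s_lt_r : 2 * s < r by move: s_lt; lra.
apply: negligibleS (negligible_bigcup (fun N : nat =>
  infinitely_approximable_negligible nu_ge1 (ler0n R N) s_gt0 two_s_lt_r
    zeta_cvg nu_incr nu_unbounded)).
move=> x /= infx; exists (Num.Def.archi_bound `|x|) => //; split => //.
exact: ltW (archi_boundP (normr_ge0 x)).
Qed.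

End abscissa.

Lemma q_irr_measure_le {R : realType} {nu : nat -> R} {x r : R} : 0 < r ->
  finite_set (approx_pairs nu r x) -> (q_irr_measure nu x <= r%:E)%E.
Proof. by move=> r_gt0 fin; apply: ereal_inf_lbound; exists r. Qed.

Theorem proposition3p1 (R : realType) (q nu : nat -> R) :
  is_beurling_primes q ->
  lists_increasingly nu (beurling_integers q) ->
  (abscissa_conv nu < +oo)%E ->
  {ae (@lebesgue_measure R), forall x : R,
     (q_irr_measure nu x <= 2%:E * abscissa_conv nu)%E}.
Proof.
move=> hq hnu sigma_fin.
have nu_ge1 := listing_ge1 hq hnu.
have sigma_ge0 := abscissa_ge0 nu_ge1.
set sigma := fine (abscissa_conv nu).
have sigmaE : abscissa_conv nu = sigma%:E by rewrite fineK // ge0_fin_numE.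
pose r (k : nat) := 2 * sigma + k.+1%:R^-1.
have r_gt0 k : 0 < r k.
  by rewrite ltr_wpDl ?mulr_ge0 // -lee_fin -sigmaE.
have half_r k : (abscissa_conv nu < (r k / 2)%:E)%E.
  by rewrite sigmaE lte_fin /r mulrDl mulrAC divff // mul1r ltrDl divr_gt0.
have exceptional k := infinitely_approximable_ae_negligible nu_ge1 hnu.1
  (listing_unbounded hq hnu) (half_r k).
apply: (negligibleS _ (negligible_bigcup exceptional)).
move=> x /= not_le; apply: contrapT => all_finite; apply: not_le.
rewrite sigmaE -EFinM; apply: lee_inv_succ => k.
apply: (q_irr_measure_le (r_gt0 k)); apply: contrapT => infx.
by apply: all_finite; exists k.
Qed.
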